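(* Let $k$ be an infinite Brauer field of characteristic $0$, let $d\ge 1$, and assume that $\Sigma^*((d))$ holds. There is a constant $C(d)$ such that for every finite-dimensional $k$-vector space $V$ and every homogeneous polynomial $f$ of degree $d$ on $V$ that is diagonal of rank $>C(d)$, there is a three-dimensional subspace $E$ of $V$ such that $f|_E$ is good.
   Context: A field $k$ is a Brauer field if for every $d\ge 1$ there is $N_k(d)$ such that every equation $a_1x_1^d+\cdots+a_nx_n^d=0$ with $n>N_k(d)$, $a_i\in k$, has a non-trivial solution in $k^n$. A homogeneous polynomial $f$ of degree $d$ on $V$ is diagonal of rank $r$ if there are linear coordinates $x_1,\ldots,x_n$ on $V$ with $f=a_1x_1^d+\cdots+a_rx_r^d$ and $a_1,\ldots,a_r\in k$ all nonzero. A homogeneous polynomial $h$ of degree $d$ on a $3$-dimensional space is good if $h=xy^{d-1}+ay^d+bz^d$ for some coordinates $x,y,z$, some $a\in k$, $b\in k^{\times}$. Multi-degrees are tuples $(e_1\ge\cdots\ge e_s\ge 1)$ compared lexicographically (a proper initial segment being smaller). Strength: for a homogeneous $f$ of degree $d>0$, $\operatorname{str}(f)$ is the minimal $s$ with $f=\sum_{t=1}^s g_th_t$, $g_t,h_t$ homogeneous over $k$ of degrees $<d$; the strength of a tuple is the minimal strength of a nontrivial $k$-linear combination of its members of equal degree. $\Sigma(\underline{e})$ is the statement: there is a constant $C$ such that for every finite-dimensional $k$-vector space $U$ and every tuple $\underline{g}$ of homogeneous polynomials on $U$ of multi-degree $\underline{e}$ with $\operatorname{str}(\underline{g})>C$,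 the $k$-points of the common zero locus $Z(\underline{g})$ are Zariski dense in $Z(\underline{g})$. $\Sigma^*((d))$ is the statement that $\Sigma(\underline{e})$ holds for every multi-degree $\underline{e}<(d)$, i.e. every multi-degree with first entry $<d$. *)

From HB Require Import structures.
From mathcomp Require Import all_boot all_order all_algebra.
From mathcomp Require Import mpoly.
Set Implicit Arguments. Unset Strict Implicit. Unset Printing Implicit Defensive.
Import Order.TTheory GRing.Theory.
Local Open Scope ring_scope.

(* A finite-dimensional k-vector space V is modelled as k^n (a choice of
   linear coordinates), polynomial functions on V as {mpoly k[n]}. *)

Section Defs.
Variable k : fieldType.

(* p is homogeneous of degree d (the zero polynomial is homogeneous of every degree) *)
Definition homogeneous (n d : nat) (p : {mpoly k[n]}) : Prop :=
  p \is @ishomog1 n k d mdeg.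

Definition linforms (n m : nat) (M : 'M[k]_(n, m)) : n.-tuple {mpoly k[m]} :=
  [tuple \sum_(j < m) M i j *: 'X_j | i < n].

Definition pullback (n m : nat) (M : 'M[k]_(n, m)) (p : {mpoly k[n]}) : {mpoly k[m]} :=
  comp_mpoly (linforms M) p.

Definition brauer_field : Prop :=
  forall d : nat, (1 <= d)%N -> exists N : nat,
    forall (n : nat) (a : 'I_n -> k), (N < n)%N ->
      exists x : 'I_n -> k, (exists i, x i != 0) /\ \sum_(i < n) a i * x i ^+ d = 0.

(* f is diagonal of rank r: in some linear coordinates x (given by an
   invertible matrix A, x_i = sum_j A i j X_j), f = a_1 x_1^d + ... + a_r x_r^d
   with all a_i nonzero. *)
Definition diagonal_of_rank (n d r : nat) (f : {mpoly k[n]}) : Prop :=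
  exists (A : 'M[k]_n) (a : 'I_n -> k),
    A \in unitmx /\ (r <= n)%N /\
    (forall i : 'I_n, (i < r)%N -> a i != 0) /\
    f = pullback A (\sum_(i < n | (i < r)%N) a i *: 'X_i ^+ d).

Definition good (d : nat) (h : {mpoly k[3]}) : Prop :=
  exists (P : 'M[k]_3) (a b : k),
    P \in unitmx /\ b != 0 /\
    h = pullback P ('X_0 * 'X_1 ^+ d.-1 + a *: 'X_1 ^+ d + b *: 'X_2 ^+ d).

Definition strength_le (n d s : nat) (f : {mpoly k[n]}) : Prop :=
  exists (deg : 'I_s -> nat) (g h : 'I_s -> {mpoly k[n]}),
    (forall t, 1 <= deg t < d)%N /\
    (forall t, homogeneous (deg t) (g t)) /\
    (forall t, homogeneous (d - deg t) (h t)) /\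
    f = \sum_(t < s) g t * h t.

Definition tuple_strength_gt (n : nat) (e : seq nat) (g : seq {mpoly k[n]}) (C : nat) : Prop :=
  forall (deg : nat) (c : 'I_(size e) -> k),
    (forall i : 'I_(size e), c i != 0 -> nth 0%N e i = deg) ->
    (exists i, c i != 0) ->
    ~ strength_le deg C (\sum_(i < size e) c i *: nth 0 g i).

Definition multidegree (e : seq nat) : Prop :=
  sorted geq e /\ all (fun x => 0 < x)%N e.

(* The k-points of Z(g) are Zariski dense in Z(g): every polynomial over k
   vanishing on Z(g)(k) vanishes on Z(g)(K) for every field extension K/k. *)
Definition kpoints_dense (n : nat) (g : seq {mpoly k[n]}) : Prop :=
  forall h : {mpoly k[n]},
    (forall x : 'I_n -> k, (forall p, p \in g -> p.@[x] = 0) -> h.@[x] = 0) ->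
    forall (K : fieldType) (phi : {rmorphism k -> K}) (x : 'I_n -> K),
      (forall p, p \in g -> (map_mpoly phi p).@[x] = 0) ->
      (map_mpoly phi h).@[x] = 0.

Definition Sigma (e : seq nat) : Prop :=
  exists C : nat, forall (n : nat) (g : seq {mpoly k[n]}),
    size g = size e ->
    (forall i, (i < size e)%N -> homogeneous (nth 0%N e i) (nth 0 g i)) ->
    tuple_strength_gt e g C ->
    kpoints_dense g.

(* lexicographic comparison e < (d) (a proper initial segment is smaller) *)
Definition multideg_lt_single (e : seq nat) (d : nat) : Prop :=
  match e with [::] => True | e1 :: _ => (e1 < d)%N end.

Definition Sigma_star (d : nat) : Prop :=
  forall e : seq nat, multidegree e -> multideg_lt_single e d -> Sigma e.

End Defs.

(* Write f = sum_(i < r) a_i x_i^d.  For vectors U, T vanishing at i0 = r-1, with moments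
   M_j = sum_(i < r) a_i U_i^d T_i^j, the restriction of f to the span of the columns
   (c U_i), (U_i T_i) and e_i0 is sum_j binom(d, j) c^(d-j) M_j X^(d-j) Y^j + a_i0 Z^d.
   It is good as soon as M_j = 0 for j < d-1 and M_(d-1) <> 0 (take c = 1/(d M_(d-1))), and
   these two moment conditions also make the columns independent; for d = 1 one uses
   M_0 = 0 <> M_1 and the columns (c U_i T_i), (U_i) instead.
   Weighted points with any B_m prescribed nonzero coefficients and first nonvanishing moment
   of order m are built by induction on m.  Given N+1 such configurations with m-th moments
   c_l, the Brauer property yields x <> 0 with sum_l c_l x_l^(d+m) = 0; dilating the l-th
   configuration by x_l then kills the moments up to m, and translating a single block with
   x_l <> 0 by s moves the (m+1)-st moment by s (m+1) x_l^(d+m) c_l, which is nonzero in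
   characteristic 0. *)

From HB Require Import structures.
From mathcomp Require Import all_boot all_order all_algebra.
From mathcomp Require Import mpoly.
From mathcomp Require Import ring zify.
Set Implicit Arguments. Unset Strict Implicit. Unset Printing Implicit Defensive.
Import GRing.Theory.
Local Open Scope ring_scope.

Section Moments.
Variables (k : fieldType) (d : nat).

Record point := Point { coef : k; scale : k; pos : k }.

Definition triple_of_point p := (coef p, scale p, pos p).
Definition point_of_triple x := Point x.1.1 x.1.2 x.2.
Lemma triple_of_pointK : cancel triple_of_point point_of_triple. Proof. by case. Qed.
HB.instance Definition _ := Equality.copy point (can_type triple_of_pointK).

Definition moment (j : nat) (t : seq point) : k :=
  \sum_(p <- t) coef p * scale p ^+ d * pos p ^+ j.

Definition dilate (c : k) (p : point) := Point (coef p) (c * scale p) (c * pos p).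
Definition translate (s : k) (p : point) := Point (coef p) (scale p) (pos p + s).

Definition vanishing_order (m : nat) (t : seq point) : Prop :=
  (forall j, (j < m)%N -> moment j t = 0) /\ moment m t != 0.

Definition order_realizable (m B : nat) : Prop :=
  forall a : seq k, size a = B -> all (fun c => c != 0) a ->
  exists2 t, map coef t = a & vanishing_order m t.

Lemma moment_dilate j c t : moment j (map (dilate c) t) = c ^+ (d + j) * moment j t.
Proof.
rewrite /moment big_map mulr_sumr; apply: eq_bigr => p _ /=.
by rewrite !exprMn exprD; ring.
Qed.

Lemma moment_translate j s t :
  moment j (map (translate s) t) = \sum_(i < j.+1) moment (j - i) t * s ^+ i *+ 'C(j, i).
Proof.
rewrite /moment big_map.
under eq_bigr => p _ do rewrite /= exprDn mulr_sumr.
rewrite exchange_big /=; apply: eq_bigr => i _.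
rewrite mulr_suml -sumrMnl; apply: eq_bigr => p _.
by rewrite mulrnAr mulrA.
Qed.

Section LowMomentsVanish.
Variables (m : nat) (t : seq point).
Hypothesis low : forall j, (j < m)%N -> moment j t = 0.

Lemma moment_translate_low j s : (j <= m)%N -> moment j (map (translate s) t) = moment j t.
Proof.
move=> jm; rewrite moment_translate big_ord_recl subn0 expr0 mulr1 bin0 mulr1n.
rewrite big1 ?addr0 // => i _.
by rewrite low ?mul0r ?mul0rn //; rewrite lift0; have := ltn_ord i; lia.
Qed.

Lemma moment_translate_succ s :
  moment m.+1 (map (translate s) t) = moment m.+1 t + s * (m.+1)%:R * moment m t.
Proof.
rewrite moment_translate !big_ord_recl subn0 expr0 mulr1 bin0 mulr1n.
rewrite big1 => [|i _]; last by rewrite low ?mul0r ?mul0rn // !lift0; have := ltn_ord i; lia.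
by rewrite addr0 lift0 subSS subn0 expr1 bin1 -mulr_natr; congr (_ + _); ring.
Qed.

Lemma moment_dilate_low c j : (j < m)%N -> moment j (map (dilate c) t) = 0.
Proof. by move=> jm; rewrite moment_dilate low ?mulr0. Qed.

End LowMomentsVanish.

Lemma order_realizable0 : order_realizable 0 1.
Proof.
case=> [|c [|? ?]] //= _ /andP[cn0 _]; exists [:: Point c 1 0] => //.
by split=> //; rewrite /moment big_seq1 /= expr1n expr0 !mulr1.
Qed.

Lemma vanishing_order_combine m L (T : 'I_L -> seq point) (x : 'I_L -> k) (l0 : 'I_L) :
  (m.+1)%:R != 0 :> k -> x l0 != 0 -> (forall l, vanishing_order m (T l)) ->
  \sum_l moment m (T l) * x l ^+ (d + m) = 0 ->
  exists2 t, map coef t = flatten [seq map coef (T l) | l <- enum 'I_L]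
           & vanishing_order m.+1 t.
Proof.
move=> m1 xl0 ordT hx.
have low l := moment_dilate_low (proj1 (ordT l)) (x l).
pose block s l := map (translate (if l == l0 then s else 0)) (map (dilate (x l)) (T l)).
pose t s := flatten [seq block s l | l <- enum 'I_L].
have momentE j s : moment j (t s) = \sum_l moment j (block s l).
  by rewrite /moment big_flatten big_map big_enum.
pose A := \sum_l moment m.+1 (map (dilate (x l)) (T l)).
pose K := (m.+1)%:R * (x l0 ^+ (d + m) * moment m (T l0)).
have momentS s : moment m.+1 (t s) = A + s * K.
  rewrite momentE; under eq_bigr => l _ do rewrite (moment_translate_succ (low l)).
  rewrite big_split; congr (_ + _).
  rewrite (bigD1 l0) //= big1 => [|l /negbTE->]; last by rewrite !mul0r.
  by rewrite eqxx addr0 moment_dilate /K; ring.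
exists (t (if A == 0 then 1 else 0)).
  rewrite /t map_flatten -map_comp; congr flatten; apply: eq_map => l /=.
  by rewrite -!map_comp.
split=> [j|].
  rewrite ltnS leq_eqVlt => /predU1P[->|jm]; rewrite momentE.
    under eq_bigr => l _ do rewrite (moment_translate_low (low l)) // moment_dilate.
    by rewrite -[RHS]hx; apply: eq_bigr => l _; rewrite mulrC.
  by rewrite big1 // => l _; rewrite (moment_translate_low (low l)) ?low // ltnW.
have Kn0 : K != 0 by rewrite !mulf_neq0 ?expf_neq0 //; case: (ordT l0).
by rewrite momentS; case: (A =P 0) => [->|/eqP]; rewrite ?add0r ?mul1r ?mul0r ?addr0.
Qed.

Lemma order_realizableS m B L :
  (m.+1)%:R != 0 :> k ->
  (forall c : 'I_L -> k, exists2 x : 'I_L -> k,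
     exists l, x l != 0 & \sum_l c l * x l ^+ (d + m) = 0) ->
  order_realizable m B -> order_realizable m.+1 (L * B).
Proof.
move=> m1 solve realB a size_a a_nz.
pose cs := reshape (nseq L B) a.
have size_cs : size cs = L by rewrite size_reshape size_nseq.
have sumn_sh : sumn (nseq L B) = size a by rewrite sumn_nseq size_a mulnC.
have flatten_cs : flatten cs = a by rewrite reshapeKr // sumn_sh.
have chunkP (l : 'I_L) : size (nth [::] cs l) = B /\ all (fun c => c != 0) (nth [::] cs l).
  split; first by rewrite -nth_shape reshapeKl ?sumn_sh // nth_nseq ltn_ord.
  apply/allP => c c_l; apply: (allP a_nz); rewrite -flatten_cs; apply/flattenP.
  by exists (nth [::] cs l); rewrite ?mem_nth ?size_cs.
have /fin_all_exists[T ordT] (l : 'I_L) :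
    exists T, map coef T = nth [::] cs l /\ vanishing_order m T.
  by have [size_l nz_l] := chunkP l; have [T] := realB _ size_l nz_l; exists T.
have [x [l0 xl0] hx] := solve (fun l => moment m (T l)).
have [|t coef_t ord_t] := @vanishing_order_combine m L T x l0 m1 xl0 _ hx.
  by move=> l; case: (ordT l).
exists t => //; rewrite coef_t -[RHS]flatten_cs -[in RHS](mkseq_nth [::] cs) size_cs.
by rewrite /mkseq -val_enum_ord -map_comp; congr flatten; apply: eq_map => l /=; case: (ordT l).
Qed.

Lemma vanishing_order_independent m t c1 c2 :
  (0 < d)%N -> (0 < m)%N -> vanishing_order m t ->
  {in t, forall p, scale p * (c1 * pos p + c2) = 0} -> c1 = 0 /\ c2 = 0.
Proof.
move=> d_gt0 m_gt0 [low ord_m] ker.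
have weighted e : c1 * moment e.+1 t + c2 * moment e t = 0.
  rewrite !mulr_sumr -big_split big1_seq //= => p /ker kerp.
  transitivity (coef p * scale p ^+ d.-1 * pos p ^+ e * (scale p * (c1 * pos p + c2))).
    by rewrite -[in LHS](prednK d_gt0) !exprS; ring.
  by rewrite kerp mulr0.
have c10 : c1 = 0.
  have := weighted m.-1; rewrite prednK // (low m.-1) ?ltn_predL // mulr0 addr0 => /eqP.
  by rewrite mulf_eq0 (negbTE ord_m) orbF => /eqP.
split=> //; move: (weighted m); rewrite c10 mul0r add0r => /eqP.
by rewrite mulf_eq0 (negbTE ord_m) orbF => /eqP.
Qed.

Definition family (I : finType) (P : pred I) (a U T : I -> k) : seq point :=
  [seq Point (a i) (U i) (T i) | i <- enum P].

Lemma moment_family (I : finType) (P : pred I) (a U T : I -> k) j :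
  moment j (family P a U T) = \sum_(i | P i) a i * U i ^+ d * T i ^+ j.
Proof. by rewrite /moment big_map big_enum. Qed.

Lemma family_independent (I : finType) (P : pred I) (a U T : I -> k) m c1 c2 :
  (0 < d)%N -> (0 < m)%N -> vanishing_order m (family P a U T) ->
  (forall i, U i * (c1 * T i + c2) = 0) -> c1 = 0 /\ c2 = 0.
Proof.
move=> d_gt0 m_gt0 ord ker; apply: (vanishing_order_independent d_gt0 m_gt0 ord).
by move=> _ /mapP[i _ ->]; apply: ker.
Qed.

Definition point0 := Point 0 0 0.

Lemma moment_family_nth n r (a : 'I_n -> k) t j :
  (0 < d)%N -> (size t <= n)%N -> (size t <= r)%N ->
  (forall i : 'I_n, (i < size t)%N -> coef (nth point0 t i) = a i) ->
  moment j (family (fun i : 'I_n => i < r)%N a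
                   (fun i => scale (nth point0 t i)) (fun i => pos (nth point0 t i)))
  = moment j t.
Proof.
move=> d_gt0 t_n t_r coef_t.
pose F i := coef (nth point0 t i) * scale (nth point0 t i) ^+ d * pos (nth point0 t i) ^+ j.
have -> : moment j t = \sum_(i < n | (i < size t)%N) F i.
  by rewrite /moment (big_nth point0) big_mkord (big_ord_widen _ F t_n).
rewrite moment_family big_mkcond [RHS]big_mkcond; apply: eq_bigr => i _ /=.
case: (ltnP i (size t)) => i_t; last first.
  by rewrite nth_default // expr0n gtn_eqF // mulr0 mul0r; case: ifP.
by rewrite (leq_trans i_t t_r) /F coef_t.
Qed.

Lemma order_realizable_family m B n r (a : 'I_n -> k) (i0 : 'I_n) :
  (0 < d)%N -> order_realizable m B -> (B <= i0 < r)%N ->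
  (forall i : 'I_n, (i < r)%N -> a i != 0) ->
  exists U T : 'I_n -> k,
    U i0 = 0 /\ vanishing_order m (family (fun i : 'I_n => i < r)%N a U T).
Proof.
move=> d_gt0 realB /andP[B_i0 i0_r] a_nz.
have B_n : (B <= n)%N by have := ltn_ord i0; lia.
pose cs := [seq a i | i <- take B (enum 'I_n)].
have size_take : size (take B (enum 'I_n)) = B by rewrite size_takel ?size_enum_ord.
have nth_cs (i : 'I_n) : (i < B)%N -> nth 0 cs i = a i.
  by move=> iB; rewrite (nth_map i0) ?nth_take ?size_take ?nth_ord_enum.
have [||t coef_t [low ord_m]] := realB cs; first by rewrite size_map.
  apply/(all_nthP 0) => i; rewrite size_map size_take => iB.
  by rewrite (nth_cs (Ordinal (leq_trans iB B_n))) // a_nz //=; lia.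
have size_t : size t = B by rewrite -(size_map coef) coef_t size_map.
pose U i := scale (nth point0 t i); pose T i := pos (nth point0 t i).
exists U, T; split; first by rewrite /U nth_default ?size_t.
have momentE j : moment j (family (fun i : 'I_n => i < r)%N a U T) = moment j t.
  apply: moment_family_nth; rewrite ?size_t //; first by lia.
  by move=> i iB; rewrite -nth_cs // -coef_t (nth_map point0) ?size_t.
by split=> [j /low|]; rewrite momentE.
Qed.

End Moments.

Lemma order_realizable_exists (k : fieldType) (d : nat) :
  (0 < d)%N -> brauer_field k -> [pchar k] =i pred0 ->
  forall m, exists B, order_realizable k d m B.
Proof.
move=> d_gt0 brauer char0; elim=> [|m [B realB]]; first by exists 1%N; exact: order_realizable0.
have [N solveN] := brauer (d + m)%N (leq_trans d_gt0 (leq_addr _ _)).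
exists (N.+1 * B)%N; apply: order_realizableS realB; first by move/pcharf0P: char0 => ->.
by move=> c; have [x [] ] := solveN _ c (ltnSn N); exists x.
Qed.

Section Restriction.
Variable k : fieldType.

Lemma pullbackX n m (M : 'M[k]_(n, m)) i : pullback M 'X_i = \sum_(j < m) M i j *: 'X_j.
Proof. by rewrite /pullback comp_mpolyXU -tnth_nth tnth_mktuple. Qed.

Lemma pullback1 n (p : {mpoly k[n]}) : pullback 1%:M p = p.
Proof.
rewrite /pullback -[RHS]comp_mpoly_id; congr comp_mpoly.
apply: eq_from_tnth => i; rewrite !tnth_mktuple (bigD1 i) //= mxE eqxx scale1r.
by rewrite big1 ?addr0 // => j /negbTE ji; rewrite mxE eq_sym ji scale0r.
Qed.

Lemma pullback_linform n m l (A : 'M[k]_(n, m)) (E : 'M[k]_(m, l)) i :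
  pullback E (\sum_(j < m) A i j *: 'X_j) = \sum_(h < l) (A *m E) i h *: 'X_h.
Proof.
rewrite /pullback (big_morph _ (comp_mpolyD _) (comp_mpoly0 _)).
under eq_bigr do rewrite comp_mpolyZ -/(pullback E _) pullbackX scaler_sumr.
rewrite exchange_big; apply: eq_bigr => h _; rewrite mxE scaler_suml.
by apply: eq_bigr => j _; rewrite scalerA.
Qed.

Lemma pullbackM n m l (A : 'M[k]_(n, m)) (E : 'M[k]_(m, l)) (p : {mpoly k[n]}) :
  pullback E (pullback A p) = pullback (A *m E) p.
Proof.
rewrite /pullback (comp_mpolyE p (linforms A)) (comp_mpolyE p (linforms (A *m E))).
rewrite (big_morph _ (comp_mpolyD _) (comp_mpoly0 _)).
apply: eq_bigr => mu _; rewrite comp_mpolyZ rmorph_prod; congr (_ *: _).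
apply: eq_bigr => i _; rewrite rmorphXn !tnth_mktuple; congr (_ ^+ _).
exact: pullback_linform.
Qed.

Lemma pullback_diag n m (M : 'M[k]_(n, m)) (P : pred 'I_n) (a : 'I_n -> k) d :
  pullback M (\sum_(i | P i) a i *: 'X_i ^+ d) =
  \sum_(i | P i) a i *: (\sum_(j < m) M i j *: 'X_j) ^+ d.
Proof.
rewrite /pullback (big_morph _ (comp_mpolyD _) (comp_mpoly0 _)).
apply: eq_bigr => i _; rewrite comp_mpolyZ rmorphXn; congr (_ *: _ ^+ _).
exact: pullbackX.
Qed.

Definition binary_coef (I : finType) (P : pred I) (a v w : I -> k) (d j : nat) : k :=
  \sum_(i | P i) a i * v i ^+ (d - j) * w i ^+ j.

Definition good_pair (I : finType) (d : nat) (P : pred I) (a v w : I -> k) : Prop :=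
  [/\ forall j, (j < d.-1)%N -> binary_coef P a v w d j = 0,
      binary_coef P a v w d d.-1 *+ d = 1 &
      forall c1 c2, (forall i, c1 * v i + c2 * w i = 0) -> c1 = 0 /\ c2 = 0].

Lemma sum_pow_binary (A : comAlgType k) (I : finType) (P : pred I) (a v w : I -> k)
    (d : nat) (x y : A) :
  \sum_(i | P i) a i *: (v i *: x + w i *: y) ^+ d =
  \sum_(j < d.+1) binary_coef P a v w d j *+ 'C(d, j) *: (x ^+ (d - j) * y ^+ j).
Proof.
under eq_bigr => i _ do rewrite exprDn scaler_sumr.
rewrite exchange_big /=; apply: eq_bigr => j _.
rewrite -scalerMnl scaler_suml -sumrMnl; apply: eq_bigr => i _.
rewrite -!scalerMnr; congr (_ *+ _).
by rewrite !exprZn -scalerAl -scalerAr !scalerA; congr (_ *: _); ring.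
Qed.

Lemma good_pair_sum_pow (A : comAlgType k) (I : finType) (P : pred I) (a v w : I -> k)
    (d : nat) (x y : A) :
  (0 < d)%N -> good_pair d P a v w ->
  \sum_(i | P i) a i *: (v i *: x + w i *: y) ^+ d =
  x * y ^+ d.-1 + binary_coef P a v w d d *: y ^+ d.
Proof.
case: d => // d _ [low top _].
rewrite sum_pow_binary big_ord_recr /= subnn expr0 mul1r binn mulr1n; congr (_ + _).
rewrite big_ord_recr /= big1 => [|j _]; last by rewrite low ?mul0rn ?scale0r.
by rewrite add0r binSn top subSnn expr1 scale1r.
Qed.

Definition restriction_mx n (v w : 'I_n -> k) (i0 : 'I_n) : 'M[k]_(n, 3) :=
  \matrix_(i, l) [:: v i; w i; (i == i0)%:R]`_l.

Lemma restriction_mx_row n (v w : 'I_n -> k) i0 i :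
  \sum_(l < 3) restriction_mx v w i0 i l *: 'X_l =
  v i *: 'X_0 + w i *: 'X_1 + (i == i0)%:R *: 'X_2 :> {mpoly k[3]}.
Proof.
rewrite !big_ord_recl big_ord0 !mxE addr0 addrA.
by congr (_ *: 'X__ + _ *: 'X__ + _ *: 'X__); apply: val_inj.
Qed.

Lemma rank_restriction_mx n (v w : 'I_n -> k) i0 :
  v i0 = 0 -> w i0 = 0 ->
  (forall c1 c2, (forall i, c1 * v i + c2 * w i = 0) -> c1 = 0 /\ c2 = 0) ->
  \rank (restriction_mx v w i0) = 3%N.
Proof.
move=> v_i0 w_i0 indep; rewrite -mxrank_tr; apply/eqP; apply: inj_row_free => c c_ker.
have c_row i : c 0 0 * v i + c 0 1 * w i + c 0 2 * (i == i0)%:R = 0.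
  have := congr1 (fun M : 'M[k]_(1, n) => M 0 i) c_ker.
  rewrite !mxE !big_ord_recl big_ord0 !mxE addr0 addrA => <-.
  by congr (c 0 _ * _ + c 0 _ * _ + c 0 _ * _); apply: val_inj.
have c2 : c 0 2 = 0 by have := c_row i0; rewrite v_i0 w_i0 !mulr0 !add0r eqxx mulr1.
have [c0 c1] : c 0 0 = 0 /\ c 0 1 = 0.
  by apply: indep => i; rewrite -(c_row i) c2 mul0r addr0.
apply/rowP => l; rewrite !mxE; case: l => [[|[|[|l]]] lt_l3] //.
- by rewrite -[RHS]c0; congr (c 0 _); apply: val_inj.
- by rewrite -[RHS]c1; congr (c 0 _); apply: val_inj.
- by rewrite -[RHS]c2; congr (c 0 _); apply: val_inj.
Qed.

Lemma diagonal_restriction_good n r d (A : 'M[k]_n) (a v w : 'I_n -> k) (i0 : 'I_n) :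
  (0 < d)%N -> (i0 < r)%N -> a i0 != 0 -> v i0 = 0 -> w i0 = 0 -> A \in unitmx ->
  good_pair d (fun i : 'I_n => i < r)%N a v w ->
  exists E : 'M[k]_(n, 3), \rank E = 3%N /\
    good d (pullback E (pullback A (\sum_(i < n | (i < r)%N) a i *: 'X_i ^+ d))).
Proof.
move=> d_gt0 i0_r a_i0 v_i0 w_i0 A_unit pair.
have [_ _ indep] := pair.
pose R := restriction_mx v w i0.
exists (invmx A *m R); split.
  apply/eqP; rewrite eqn_leq rank_leq_col -{1}(rank_restriction_mx v_i0 w_i0 indep).
  by rewrite -[R in \rank R](mul1mx R) -(mulmxV A_unit) -mulmxA mxrankM_maxr.
exists 1%:M, (binary_coef (fun i : 'I_n => i < r)%N a v w d d), (a i0).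
split; [exact: unitmx1 | split=> //].
rewrite pullback1 pullbackM mulmxA mulmxV // mul1mx pullback_diag.
have split_i i : a i *: (\sum_(l < 3) R i l *: 'X_l) ^+ d =
    a i *: (v i *: 'X_0 + w i *: 'X_1) ^+ d + (i == i0)%:R *: (a i *: 'X_2 ^+ d).
  rewrite restriction_mx_row; case: eqP => [->|_]; last by rewrite !scale0r !addr0.
  by rewrite v_i0 w_i0 !scale0r !add0r !scale1r expr0n gtn_eqF // scaler0 add0r.
under eq_bigr => i _ do rewrite split_i.
rewrite big_split /= (good_pair_sum_pow _ _ d_gt0 pair); congr (_ + _).
rewrite (bigD1 i0) //= eqxx scale1r big1 ?addr0 // => i /andP[_ /negbTE->].
by rewrite scale0r.
Qed.

End Restriction.

Lemma good_pair_of_order_pred (k : fieldType) (d : nat) (I : finType) (P : pred I)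
    (a U T : I -> k) :
  (1 < d)%N -> d%:R != 0 :> k -> vanishing_order d d.-1 (family P a U T) ->
  exists v w : I -> k, good_pair d P a v w /\ (forall i, U i = 0 -> v i = 0 /\ w i = 0).
Proof.
move=> d_gt1 d_nz ord; have [low top] := ord.
pose al := (d%:R * moment d d.-1 (family P a U T))^-1.
have al_nz : al != 0 by rewrite invr_eq0 mulf_neq0.
exists (fun i => al * U i), (fun i => U i * T i); split=> [|i ->]; rewrite ?mulr0 ?mul0r //.
have coefE j : (j <= d)%N ->
    binary_coef P a (fun i => al * U i) (fun i => U i * T i) d j =
    al ^+ (d - j) * moment d j (family P a U T).
  move=> j_d; rewrite moment_family mulr_sumr; apply: eq_bigr => i _.
  by rewrite !exprMn -[in U i ^+ d](subnK j_d) exprD; ring.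
split=> [j j_lt|| c1 c2 ker].
- by rewrite coefE ?low ?mulr0 //; lia.
- rewrite coefE ?leq_pred // -mulr_natr (_ : (d - d.-1)%N = 1%N); last by lia.
  by rewrite expr1 -mulrA (mulrC _ d%:R) mulVf // mulf_neq0.
have [c2_0 c1al_0] : c2 = 0 /\ c1 * al = 0.
  apply: (family_independent _ _ ord) => [||i]; try lia.
  by rewrite -(ker i); ring.
by split=> //; move/eqP: c1al_0; rewrite mulf_eq0 (negbTE al_nz) orbF => /eqP.
Qed.

Lemma good_pair_of_order1 (k : fieldType) (I : finType) (P : pred I) (a U T : I -> k) :
  vanishing_order 1 1 (family P a U T) ->
  exists v w : I -> k, good_pair 1 P a v w /\ (forall i, U i = 0 -> v i = 0 /\ w i = 0).
Proof.
move=> ord; have [_ top] := ord.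
pose al := (moment 1 1 (family P a U T))^-1.
have al_nz : al != 0 by rewrite invr_eq0.
exists (fun i => al * U i * T i), U; split=> [|i ->]; rewrite ?mulr0 ?mul0r //.
split=> [//|| c1 c2 ker].
  rewrite /binary_coef mulr1n (eq_bigr (fun i => al * (a i * U i ^+ 1 * T i ^+ 1))).
    by rewrite -mulr_sumr -moment_family mulVf.
  by move=> i _; rewrite subn0 !expr1 expr0 mulr1; ring.
have [c1al_0 c2_0] : c1 * al = 0 /\ c2 = 0.
  by apply: (family_independent _ _ ord) => // i; rewrite -(ker i); ring.
by split=> //; move/eqP: c1al_0; rewrite mulf_eq0 (negbTE al_nz) orbF => /eqP.
Qed.

Lemma good_pair_of_vanishing_order (k : fieldType) (d : nat) (I : finType) (P : pred I)
    (a U T : I -> k) :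
  (0 < d)%N -> d%:R != 0 :> k -> vanishing_order d (maxn 1 d.-1) (family P a U T) ->
  exists v w : I -> k, good_pair d P a v w /\ (forall i, U i = 0 -> v i = 0 /\ w i = 0).
Proof.
move=> d_gt0 d_nz; case: (ltnP 1 d) => [d_gt1 | d_le1].
  have -> : maxn 1 d.-1 = d.-1 by apply/maxn_idPr; lia.
  exact: good_pair_of_order_pred.
have -> : d = 1%N by lia.
exact: good_pair_of_order1.
Qed.

Unset Implicit Arguments.

Theorem proposition5p1 (k : fieldType)
    (k_infinite : forall s : seq k, exists x : k, x \notin s)
    (k_char0 : [pchar k] =i pred0)
    (k_brauer : brauer_field k)
    (d : nat) (hd : (1 <= d)%N)
    (hSigma : Sigma_star k d) :
  exists C : nat, forall (n : nat) (f : {mpoly k[n]}),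
    homogeneous d f ->
    (exists r : nat, (C < r)%N /\ diagonal_of_rank d r f) ->
    exists E : 'M[k]_(n, 3), \rank E = 3%N /\ good d (pullback E f).
Proof.
have d_nz : d%:R != 0 :> k by move/pcharf0P: k_char0 => ->; rewrite -lt0n.
have [B realB] := order_realizable_exists hd k_brauer k_char0 (maxn 1 d.-1).
exists B => n f _ [r [B_r [A [a [A_unit [r_n [a_nz ->]]]]]]].
have i0_n : (r.-1 < n)%N by lia.
pose i0 := Ordinal i0_n.
have i0_r : (i0 < r)%N by rewrite /=; lia.
have [|U [T [U_i0 ord]]] := order_realizable_family hd realB (i0 := i0) _ a_nz.
  by rewrite /=; lia.
have [v [w [pair vw_U]]] := good_pair_of_vanishing_order hd d_nz ord.
have [v_i0 w_i0] := vw_U _ U_i0.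
exact: diagonal_restriction_good hd i0_r (a_nz _ i0_r) v_i0 w_i0 A_unit pair.
Qed.
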